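(* Let $p$ be a prime, $m$ a positive integer, $q=p^m$, $n=q^2+1$. Let $\lambda\in\mathbb{F}_{q^2}^*$ have multiplicative order $r$, where $r\mid (q+1)$ and $\nu_2(r)=\nu_2(q+1)$. Let $\delta\in\mathbb{F}_{q^4}$ be a primitive $rn$-th root of unity with $\delta^n=\lambda$. For a positive integer $s$ with $s\mid (q^2-1)$, let $U_{s(q^2+1)}$ denote the set of all $s(q^2+1)$-th roots of unity in $\mathbb{F}_{q^4}^*$. Define $f(x)=x^{q+1}$ for $x\in U_{r(q^2+1)}$, and for $y_0$ let $f^{-1}(y_0)=\{x\in U_{r(q^2+1)}: f(x)=y_0\}$. Let $T=\{\delta^{-i}: 0\le i\le q^2\}$ and $\lambda^jT=\{\lambda^j\delta^{-i}: 0\le i\le q^2\}$ for $0\le j\le r-1$. Then $f$ maps $U_{r(q^2+1)}$ onto $U_{q^2+1}$. Moreover, for $y_0\in U_{q^2+1}$, if $f(x_0)=y_0$ for some $x_0\in U_{r(q^2+1)}$, then $f^{-1}(y_0)=\{\lambda^jx_0: 0\le j\le r-1\}$ and $|f^{-1}(y_0)\cap\lambda^jT|=1$ for every $0\le j\le r-1$.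
   Context: $\nu_2(\cdot)$ denotes the $2$-adic valuation of a positive integer. *)

From HB Require Import structures.
From mathcomp Require Import all_boot all_order all_algebra all_field.
Set Implicit Arguments. Unset Strict Implicit. Unset Printing Implicit Defensive.
Import GRing.Theory.
Local Open Scope ring_scope.

Definition Uroots (F : finFieldType) (k : nat) : {set F} :=
  [set x : F | x ^+ k == 1].

Definition Tset (F : finFieldType) (delta : F) (N : nat) : {set F} :=
  [set delta ^- (val i) | i : 'I_N].

Definition scaleset (F : finFieldType) (c : F) (A : {set F}) : {set F} :=
  [set c * t | t in A].

Definition fpreim (F : finFieldType) (D : {set F}) (e : nat) (y0 : F) : {set F} :=
  [set x in D | x ^+ e == y0].

From HB Require Import structures.
From mathcomp Require Import all_boot all_order all_algebra all_field.
From mathcomp Require Import ring.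
Set Implicit Arguments. Unset Strict Implicit. Unset Printing Implicit Defensive.
Import GRing.Theory.
Local Open Scope ring_scope.

(* Everything happens in the cyclic group U_(rn) = <delta>.  Since
   gcd(q + 1, r n) = r, the power map x |-> x^(q+1) is onto U_n and its kernel
   is the subgroup U_r = <lambda>, lambda = delta^n; so every fiber is a coset
   of U_r.  The set T = {delta^-i : i < n}, and each translate lambda^j T of it,
   is a transversal of U_r in U_(rn), hence meets every fiber exactly once.
   The arithmetic input gcd(q + 1, r n) = r comes from gcd(q + 1, q^2 + 1) | 2
   together with the oddness of (q + 1) / r. *)

Lemma gcdn_succ_sqr_succ (q : nat) : (gcdn (q + 1) (q ^ 2 + 1) %| 2)%N.
Proof.
set d := gcdn _ _; have d_q1 : (d %| q + 1)%N := dvdn_gcdl _ _.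
have d_2q : (d %| 2 * q)%N.
  have sqr_q1 : ((q + 1) * (q + 1) = q ^ 2 + 1 + 2 * q)%N by ring.
  by rewrite -(dvdn_addr _ (dvdn_gcdr _ _)) -sqr_q1 dvdn_mulr.
rewrite -(dvdn_addr 2 d_2q).
have -> : (2 * q + 2 = 2 * (q + 1))%N by ring.
by rewrite dvdn_mull.
Qed.

Lemma gcdn_succ_mul_sqr_succ (q r : nat) :
  (r %| q + 1)%N -> logn 2 r = logn 2 (q + 1) ->
  gcdn (q + 1) (r * (q ^ 2 + 1)) = r.
Proof.
move=> /dvdnP[s def_q1] logn_r.
have r_gt0 : (0 < r)%N by case: r def_q1 {logn_r} => [|//]; rewrite muln0 addn1.
have s_gt0 : (0 < s)%N by case: s def_q1 {logn_r} => [|//]; rewrite addn1.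
have coprime_2s : coprime 2 s.
  rewrite prime_coprime //; apply: contraTN isT => two_s.
  have : (0 < logn 2 s)%N by rewrite logn_gt0 mem_primes s_gt0 two_s.
  by rewrite -(ltn_add2r (logn 2 r)) -lognM // -def_q1 logn_r ltnn.
have coprime_s : coprime s (q ^ 2 + 1).
  have : (gcdn s (q ^ 2 + 1) %| gcdn 2 s)%N.
    rewrite dvdn_gcd dvdn_gcdl andbT; apply: dvdn_trans (gcdn_succ_sqr_succ q).
    rewrite dvdn_gcd dvdn_gcdr andbT def_q1.
    exact: dvdn_trans (dvdn_gcdl _ _) (dvdn_mulr _ _).
  by rewrite (eqP coprime_2s) dvdn1.
by rewrite def_q1 [(r * _)%N]mulnC -muln_gcdl (eqP coprime_s) mul1n.
Qed.

Lemma expr_gcdn_eq1 (R : pzSemiRingType) (z : R) (a b : nat) :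
  (0 < a)%N -> z ^+ a = 1 -> z ^+ b = 1 -> z ^+ gcdn a b = 1.
Proof.
move=> a_gt0 za zb; case: (egcdnP b a_gt0) => ka kb def_ka _.
have := congr1 (GRing.exp z) def_ka.
by rewrite exprD mulnC exprM za expr1n mulnC exprM zb expr1n mul1r => <-.
Qed.

Section PowerMapOnRootsOfUnity.

Variables (F : finFieldType) (g n e : nat) (delta : F).
Hypotheses (delta_prim : (g * n).-primitive_root delta)
  (e_gt0 : (0 < e)%N) (gcdn_e : gcdn e (g * n) = g).

Let U := Uroots F (g * n).
Let lambda := delta ^+ n.

Let gn_gt0 : (0 < g * n)%N := prim_order_gt0 delta_prim.

Let g_gt0 : (0 < g)%N.
Proof. by move: gn_gt0; rewrite muln_gt0 => /andP[]. Qed.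

Let n_gt0 : (0 < n)%N.
Proof. by move: gn_gt0; rewrite muln_gt0 => /andP[]. Qed.

Let g_dvd_e : (g %| e)%N.
Proof. by rewrite -gcdn_e dvdn_gcdl. Qed.

Let lambda_prim : g.-primitive_root lambda.
Proof.
by have := dvdn_prim_root delta_prim (dvdn_mulr n (dvdnn g)); rewrite mulKn.
Qed.

Let lambdaX_eq1 j k : (g %| k)%N -> (lambda ^+ j) ^+ k = 1.
Proof.
move=> g_k; have lambda_g := prim_expr_order lambda_prim.
by rewrite exprAC (expr_dvd lambda_g g_k) expr1n.
Qed.

Let U_neq0 x : x \in U -> x != 0.
Proof.
rewrite inE; apply: contraTneq => ->.
by rewrite expr0n gtn_eqF // eq_sym oner_eq0.
Qed.

Lemma Uroots_expr x : x \in U -> x ^+ e \in Uroots F n.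
Proof.
by rewrite !inE -exprM => /eqP xU; rewrite (expr_dvd xU) ?dvdn_mul.
Qed.

Lemma Uroots_expr_eq x z :
  x \in U -> z \in U -> (z ^+ e == x ^+ e) = ((z / x) ^+ g == 1).
Proof.
move=> xU zU; have x_neq0 := U_neq0 xU.
have zxU : z / x \in U.
  by move: (xU) (zU); rewrite !inE expr_div_n => /eqP-> /eqP->; rewrite divr1.
rewrite -[z ^+ e == _](can_eq (divfK (expf_neq0 e x_neq0))) divff ?expf_neq0 //.
rewrite -expr_div_n; apply/idP/idP => [/eqP|/eqP zx_g]; last first.
  by rewrite (expr_dvd zx_g).
move: zxU; rewrite inE => /eqP zx_gn zx_e.
by rewrite -gcdn_e (expr_gcdn_eq1 e_gt0 zx_e zx_gn).
Qed.

Lemma Uroots_expr_onto y : y \in Uroots F n -> exists2 x, x \in U & x ^+ e = y.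
Proof.
rewrite inE => /eqP yn.
have y_gn : y ^+ (g * n) = 1 by rewrite mulnC exprM yn expr1n.
have [[i _] /= def_y] := prim_rootP delta_prim y_gn.
have /dvdnP[t def_i] : (g %| i)%N.
  by rewrite -(dvdn_pmul2r n_gt0) (prim_order_dvd delta_prim) exprM -def_y yn.
case: (egcdnP (g * n) e_gt0) => k k' def_k _; rewrite gcdn_e in def_k.
exists (delta ^+ (t * k)).
  by rewrite inE exprAC (prim_expr_order delta_prim) expr1n.
rewrite def_y def_i -exprM; apply/eqP; rewrite (eq_prim_root_expr delta_prim).
by rewrite -mulnA def_k mulnDr mulnA modnMDl.
Qed.

Lemma fpreim_Uroots_expr x0 :
  x0 \in U -> fpreim U e (x0 ^+ e) = [set lambda ^+ (val j) * x0 | j : 'I_g].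
Proof.
move=> x0U; apply/setP => z; rewrite inE.
apply/andP/imsetP => [[zU]|[j _ ->]].
  rewrite (Uroots_expr_eq x0U zU) => /eqP zx0_g.
  have [k def_k] := prim_rootP lambda_prim zx0_g.
  by exists k; rewrite // -def_k divfK ?(U_neq0 x0U).
have zU : lambda ^+ j * x0 \in U.
  by move: x0U; rewrite !inE exprMn lambdaX_eq1 ?dvdn_mulr // mul1r.
by rewrite zU (Uroots_expr_eq x0U zU) mulfK ?(U_neq0 x0U) ?lambdaX_eq1.
Qed.

Lemma card_fpreim_scaleset x0 j : x0 \in U ->
  #|fpreim U e (x0 ^+ e) :&: scaleset (lambda ^+ j) (Tset delta n)| = 1%N.
Proof.
move=> x0U; have /[!inE] /eqP x0_gn := x0U.
have [[b _] /= def_x0] := prim_rootP delta_prim x0_gn.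
have fpreimE i :
    (lambda ^+ j * delta ^- i \in fpreim U e (x0 ^+ e)) = (n %| b + i)%N.
  have zU : lambda ^+ j * delta ^- i \in U.
    rewrite inE exprMn lambdaX_eq1 ?dvdn_mulr // mul1r exprVn exprAC.
    by rewrite (prim_expr_order delta_prim) expr1n invr1.
  rewrite inE zU (Uroots_expr_eq x0U zU) def_x0 -mulrA -invfM -exprD.
  rewrite exprMn lambdaX_eq1 // mul1r exprVn invr_eq1 -exprM.
  by rewrite -(prim_order_dvd delta_prim) mulnC dvdn_pmul2r // addnC.
have index_uniq i i' : (i < n)%N -> (i' < n)%N ->
    (n %| b + i)%N -> (n %| b + i')%N -> i = i'.
  move=> i_lt i'_lt /eqP b_i /eqP b_i'; apply/eqP.
  by rewrite -(modn_small i_lt) -(modn_small i'_lt) -(eqn_modDl b) b_i b_i'.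
pose i0 := ((n - b %% n) %% n)%N; have i0_lt : (i0 < n)%N by rewrite ltn_pmod.
have n_b_i0 : (n %| b + i0)%N.
  by rewrite /dvdn modnDmr -modnDml subnKC ?modnn // ltnW ?ltn_pmod.
apply/eqP/cards1P; exists (lambda ^+ j * delta ^- i0); apply/setP => z.
rewrite in_setI in_set1 /scaleset /Tset.
apply/andP/eqP => [[zA /imsetP[_ /imsetP[i _ ->] def_z]]|->].
  rewrite def_z fpreimE in zA *.
  by rewrite /= (index_uniq _ _ (ltn_ord i) i0_lt zA n_b_i0).
split; first by rewrite fpreimE.
by apply/imsetP; exists (delta ^- i0) => //; apply/imsetP; exists (Ordinal i0_lt).
Qed.

End PowerMapOnRootsOfUnity.

Theorem lemma3p1 (p m q n r : nat) (F : finFieldType) (lambda delta : F) :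
  prime p -> (0 < m)%N -> q = (p ^ m)%N -> n = (q ^ 2 + 1)%N ->
  #|F| = (q ^ 4)%N ->
  (* lambda in F_{q^2}^* of multiplicative order r *)
  lambda ^+ (q ^ 2) = lambda -> lambda != 0 -> r.-primitive_root lambda ->
  (r %| q + 1)%N -> logn 2 r = logn 2 (q + 1) ->
  (* delta a primitive (r n)-th root of unity with delta^n = lambda *)
  (r * n).-primitive_root delta -> delta ^+ n = lambda ->
  (forall x, x \in Uroots F (r * n) -> x ^+ (q + 1) \in Uroots F n) /\
  (forall y, y \in Uroots F n -> exists2 x, x \in Uroots F (r * n) & x ^+ (q + 1) = y) /\
  (forall y0 x0, y0 \in Uroots F n -> x0 \in Uroots F (r * n) -> x0 ^+ (q + 1) = y0 ->
     fpreim (Uroots F (r * n)) (q + 1) y0 = [set lambda ^+ (val j) * x0 | j : 'I_r] /\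
     (forall j, (j < r)%N ->
        #|fpreim (Uroots F (r * n)) (q + 1) y0 :&: scaleset (lambda ^+ j) (Tset delta n)| = 1%N)).
Proof.
move=> _ _ _ -> _ _ _ _ r_dvd logn_r delta_prim <-.
have gcdn_q1 := gcdn_succ_mul_sqr_succ r_dvd logn_r.
have q1_gt0 : (0 < q + 1)%N by rewrite addn1.
split; first exact: Uroots_expr gcdn_q1.
split; first exact: Uroots_expr_onto delta_prim q1_gt0 gcdn_q1.
move=> _ x0 _ x0U <-.
split; first exact: (fpreim_Uroots_expr delta_prim q1_gt0 gcdn_q1 x0U).
by move=> j _; apply: (card_fpreim_scaleset delta_prim q1_gt0 gcdn_q1 j x0U).
Qed.
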